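(* Let $x=(x_1,\dots,x_n)\in B^n$ and suppose that its expansion under the multiplicative Selmer algorithm $S$ eventually becomes periodic, i.e. there are $m\geq 0$, $p\geq 1$ with $S^{m+p}x=S^mx$. Then \begin{equation*} \lim_{s\to\infty}\left(\frac{B_1^{(s)}}{B_0^{(s)}},\dots,\frac{B_n^{(s)}}{B_0^{(s)}}\right)=x. \end{equation*} Thus the periodic multiplicative algorithm of Selmer is weakly convergent and even uniformly weakly convergent, i.e. for every column index $g$, $0\leq g\leq n$, the ratios $\left(\frac{B^{(s)}_{1g}}{B^{(s)}_{0g}},\dots,\frac{B^{(s)}_{ng}}{B^{(s)}_{0g}}\right)$ of the entries of $\beta^{(s)}$ converge to $x$ as $s\to\infty$.
   Context: Let $B^n:=\{(x_1,\dots,x_n):\,1\geq x_1\geq\dots\geq x_n\geq 0\}$. The multiplicative Selmer algorithm (MSA) is the map $S\colon B^n\to B^n$, \begin{equation*} S(x_1,\dots,x_n)=\left(\frac{x_2}{x_1},\dots,\frac{x_n}{x_1},\frac{1-kx_n}{x_1}\right),\qquad k=k(x):=\left[x_n^{-1}\right], \end{equation*} with digit set $\mathbb{N}$ and cells $B(k)=\{x\in B^n:\frac{1}{k+1}<x_n\leq\frac1k\}$. The digits of $x$ are $k_i=k(S^{i-1}x)$, $i\geq 1$. To the digit $k$ one associates the $(n+1)\times(n+1)$-matrix $\beta(k)$ whose first row is $(0,\dots,0,k,1)$ (entry $k$ in the second-to-last column, entry $1$ in the last column), whose entries directly below the main diagonal are $1$, and whose other entries are $0$; it satisfies $\det\beta(k)=\pm1$.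 For $s\geq 1$ put $\beta^{(s)}(k_1,\dots,k_s):=\beta(k_1)\cdots\beta(k_s)=((B^{(s)}_{ij}))_{0\leq i,j\leq n}$, with $\beta^{(0)}$ the identity matrix. Its columns are written as \begin{equation*} \beta^{(s)}=\begin{pmatrix} B_0^{(s-n+1)} & \dots & B_0^{(s-1)} & B_0^{(s)} & B_0^{(s-n)} \\ \vdots & & & & \vdots\\ B_n^{(s-n+1)} & \dots & B_n^{(s-1)} & B_n^{(s)} & B_n^{(s-n)} \end{pmatrix}, \end{equation*} so $B_i^{(s)}$ is the entry in row $i$ and second-to-last column of $\beta^{(s)}$, and $B_i^{(s+1)}=k_{s+1}B_i^{(s-n+1)}+B_i^{(s-n)}$ for $i=0,\dots,n$. If $y=S^sx$ then $x_i=\frac{B_i^{(s-n+1)}+y_1B_i^{(s-n+2)}+\dots+y_{n-1}B_i^{(s)}+y_nB_i^{(s-n)}}{B_0^{(s-n+1)}+y_1B_0^{(s-n+2)}+\dots+y_{n-1}B_0^{(s)}+y_nB_0^{(s-n)}}$, $1\leq i\leq n$. *)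

From HB Require Import structures.
From mathcomp Require Import all_boot all_order all_algebra.
From mathcomp Require Import all_classical all_reals all_analysis.
Set Implicit Arguments. Unset Strict Implicit. Unset Printing Implicit Defensive.
Import Order.TTheory GRing.Theory Num.Theory.
Local Open Scope ring_scope.

Section Selmer.
Variable R : realType.
Variable n : nat.

(* A point (x_1,...,x_n) is a function 'I_n -> R; x i is x_{i+1}. *)
(* 0-based coordinate access: xcoord x j = x_{j+1} (0 when j >= n). *)
Definition xcoord (x : 'I_n -> R) (j : nat) : R := oapp x 0 (insub j).

Definition inB (x : 'I_n -> R) : Prop :=
  xcoord x 0 <= 1 /\ (forall j : nat, (j.+1 < n)%N -> xcoord x j.+1 <= xcoord x j)
  /\ 0 <= xcoord x n.-1.

Definition digit (x : 'I_n -> R) : nat := Num.truncn ((xcoord x n.-1)^-1).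

Definition selmer (x : 'I_n -> R) : 'I_n -> R := fun i =>
  if (i.+1 < n)%N then xcoord x i.+1 / xcoord x 0
  else (1 - (digit x)%:R * xcoord x n.-1) / xcoord x 0.

Definition beta (k : nat) : 'M[R]_(n.+1) :=
  \matrix_(i, j) if i == 0%N :> nat then
                   (if j == n.-1 :> nat then k%:R else if j == n :> nat then 1 else 0)
                 else (if i == j.+1 :> nat then 1 else 0).

Fixpoint betas (x : 'I_n -> R) (s : nat) : 'M[R]_(n.+1) :=
  match s with
  | 0 => 1%:M
  | s'.+1 => betas x s' *m beta (digit (iter s' selmer x))
  end.

End Selmer.

From HB Require Import structures.
From mathcomp Require Import all_boot all_order all_algebra.
From mathcomp Require Import all_classical all_reals all_analysis.
From mathcomp Require Import ring lra zify.
Set Implicit Arguments. Unset Strict Implicit. Unset Printing Implicit Defensive.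
Import Order.TTheory GRing.Theory Num.Theory.
Import numFieldNormedType.Exports.
Local Open Scope classical_set_scope.
Local Open Scope ring_scope.

(* The column (1, x) is, up to a positive factor, beta^(s) applied to (1, S^s x), so
   each x_i is a mediant of the ratios B_ig / B_0g taken over the columns g of beta^(s).
   Since beta^(s+t) = beta^(s) * (nonnegative matrix), the intervals spanned by these
   ratios are nested in s and all contain x_i.  Any n(n+1)+1 consecutive factors beta(k),
   k >= 1, have a positive product.  For a periodic expansion the product Q over a block
   of p(n(n+1)+1) steps after the preperiod is the same for every block, and a mediant
   argument shows that multiplying by the positive matrix Q shrinks the width of the
   interval by the factor 1 - C^-2 < 1, where C bounds the ratio of two entries in a row
   of Q.  Hence the widths tend to 0 and every column ratio converges to x_i. *)

Section Mediant.
Variables (R : realFieldType) (I : finType).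
Implicit Types (a b f w : I -> R) (lo hi C : R).

Definition mediant a b w : R := (\sum_j b j * w j) / (\sum_j a j * w j).

Lemma mediant_den_gt0 a w : (forall j, 0 < a j) -> (forall j, 0 <= w j) ->
  (exists j, 0 < w j) -> 0 < \sum_j a j * w j.
Proof.
move=> a_gt0 w_ge0 [j wj_gt0]; rewrite (bigD1 j) //= ltr_pwDl ?mulr_gt0 //.
by apply: sumr_ge0 => i _; exact: mulr_ge0 (ltW (a_gt0 i)) (w_ge0 i).
Qed.

Lemma mediant_itv a b w lo hi : (forall j, 0 < a j) -> (forall j, 0 <= w j) ->
  (exists j, 0 < w j) -> (forall j, lo <= b j / a j <= hi) ->
  lo <= mediant a b w <= hi.
Proof.
move=> a_gt0 w_ge0 w_nz b_itv; have den_gt0 := mediant_den_gt0 a_gt0 w_ge0 w_nz.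
have bE i : b i = b i / a i * a i by rewrite divfK ?gt_eqF.
have aw_ge0 i : 0 <= a i * w i by exact: mulr_ge0 (ltW (a_gt0 i)) (w_ge0 i).
rewrite /mediant ler_pdivlMr // ler_pdivrMr // !mulr_sumr.
apply/andP; split; apply: ler_sum => i _; rewrite [b i]bE -mulrA;
  apply: ler_wpM2r => //; by case/andP: (b_itv i).
Qed.

Lemma mediant_subl a b w c : \sum_j a j * w j != 0 ->
  c - mediant a b w = mediant a (fun j => c * a j - b j) w.
Proof.
move=> den_neq0; rewrite /mediant.
under [X in _ = X / _]eq_bigr do rewrite mulrBl -mulrA.
by rewrite sumrB -mulr_sumr; field.
Qed.

Lemma mediant_comparable (i0 : I) a f q1 q2 C :
  (forall j, 0 < a j) -> (forall j, 0 <= f j) ->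
  (forall j, 0 < q1 j) -> (forall j, 0 < q2 j) ->
  (forall j, q1 j <= C * q2 j) -> (forall j, q2 j <= C * q1 j) ->
  mediant a f q2 <= C ^+ 2 * mediant a f q1.
Proof.
move=> a_gt0 f_ge0 q1_gt0 q2_gt0 q12 q21.
have C_gt0 : 0 < C.
  by have := q21 i0; have := q1_gt0 i0; have := q2_gt0 i0; nra.
have [D1_gt0 D2_gt0] : 0 < \sum_j a j * q1 j /\ 0 < \sum_j a j * q2 j.
  by split; apply: mediant_den_gt0 => //; by [move=> j; apply: ltW | exists i0].
have N21 : \sum_j f j * q2 j <= C * \sum_j f j * q1 j.
  by rewrite mulr_sumr; apply: ler_sum => j _; rewrite mulrCA ler_wpM2l.
have D12 : \sum_j a j * q1 j <= C * \sum_j a j * q2 j.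
  by rewrite mulr_sumr; apply: ler_sum => j _; rewrite mulrCA ler_wpM2l ?(ltW (a_gt0 j)).
rewrite /mediant; set N1 := \sum_j f j * q1 j in N21 *.
set r1 := N1 / _; have N1E : N1 = r1 * \sum_j a j * q1 j by rewrite divfK ?gt_eqF.
have r1_ge0 : 0 <= r1.
  apply: divr_ge0 (sumr_ge0 _ _) (ltW D1_gt0) => j _.
  exact: mulr_ge0 (f_ge0 j) (ltW (q1_gt0 j)).
have := ler_wpM2l (mulr_ge0 (ltW C_gt0) r1_ge0) D12.
rewrite ler_pdivrMr // -mulrA -N1E; nra.
Qed.

Lemma mediant_contract (i0 : I) a b q1 q2 lo hi C :
  (forall j, 0 < a j) -> (forall j, lo <= b j / a j <= hi) ->
  (forall j, 0 < q1 j) -> (forall j, 0 < q2 j) ->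
  (forall j, q1 j <= C * q2 j) -> (forall j, q2 j <= C * q1 j) ->
  mediant a b q1 - mediant a b q2 <= (hi - lo) * (1 - (C ^+ 2)^-1).
Proof.
move=> a_gt0 b_itv q1_gt0 q2_gt0 q12 q21.
have C_gt0 : 0 < C.
  by have := q21 i0; have := q1_gt0 i0; have := q2_gt0 i0; nra.
have C2_ge1 : 1 <= C ^+ 2.
  have := ler_wpM2l (ltW C_gt0) (q21 i0); have := q12 i0; have := q1_gt0 i0.
  rewrite expr2; nra.
have hi_b_ge0 j : 0 <= hi * a j - b j.
  by case/andP: (b_itv j) => _; rewrite ler_pdivrMr // subr_ge0 mulrC.
have hi_mediant q : (forall j, 0 < q j) ->
    hi - mediant a b q = mediant a (fun j => hi * a j - b j) q.
  move=> q_gt0; rewrite mediant_subl // gt_eqF // mediant_den_gt0 //;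
  by [move=> j; apply: ltW | exists i0].
have := mediant_comparable i0 a_gt0 hi_b_ge0 q1_gt0 q2_gt0 q12 q21.
rewrite -!hi_mediant // => hi_r2.
have /andP[lo_r2 _] : lo <= mediant a b q2 <= hi.
  by apply: mediant_itv => //; by [move=> j; apply: ltW | exists i0].
(* (hi - r1) + (r2 - lo) >= ((hi - r2) + (r2 - lo)) / C^2, with ri := mediant a b qi *)
have : (hi - lo) * (C ^+ 2)^-1 <= hi - mediant a b q1 + (mediant a b q2 - lo).
  by rewrite ler_pdivrMr ?(lt_le_trans ltr01) //; nra.
lra.
Qed.

End Mediant.

Lemma coin_decomp (n M : nat) : (0 < n)%N -> (n * n.-1 <= M)%N ->
  exists u v, M = (u * n + v * n.+1)%N.
Proof.
move=> n_gt0 M_ge; have MnE := divn_eq M n; have := ltn_pmod M n_gt0.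
set q := (M %/ n)%N in MnE *; set r := (M %% n)%N in MnE * => r_lt.
have r_le_q : (r <= q)%N by nia.
by exists (q - r)%N, r; nia.
Qed.

Section NonnegMatrices.
Variables (R : numDomainType) (p q r : nat).
Implicit Types (A : 'M[R]_(p, q)) (B : 'M[R]_(q, r)).

Lemma mulmx_ge0 A B : (forall i j, 0 <= A i j) -> (forall i j, 0 <= B i j) ->
  forall i j, 0 <= (A *m B) i j.
Proof. by move=> A_ge0 B_ge0 i j; rewrite mxE sumr_ge0 // => h _; rewrite mulr_ge0. Qed.

Lemma mulmx_gt0 A B i j h : (forall i j, 0 <= A i j) -> (forall i j, 0 <= B i j) ->
  0 < A i h -> 0 < B h j -> 0 < (A *m B) i j.
Proof.
move=> A_ge0 B_ge0 Aih Bhj; rewrite mxE (bigD1 h) //= ltr_pwDl ?mulr_gt0 //.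
by rewrite sumr_ge0 // => l _; rewrite mulr_ge0.
Qed.

End NonnegMatrices.

Lemma mx_gt0_ratio_bounded (R : numFieldType) (p q : nat) (A : 'M[R]_(p, q)) :
  (forall i j, 0 < A i j) -> exists C, forall i j j', A i j <= C * A i j'.
Proof.
move=> A_gt0; exists (\sum_i \sum_j \sum_j' A i j / A i j') => i j j'.
have ratio_ge0 i0 j0 j0' : 0 <= A i0 j0 / A i0 j0' by rewrite divr_ge0 ?ltW.
rewrite -ler_pdivrMr // (bigD1 i) //= (bigD1 j) //= (bigD1 j') //= -!addrA lerDl.
by rewrite !addr_ge0 // sumr_ge0 // => *; rewrite sumr_ge0 // => *; rewrite sumr_ge0.
Qed.

Lemma cvg_dist_le_geometric (R : realType) (u : nat -> R) (l D q : R) (N : nat -> nat) :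
  0 <= q < 1 -> (forall J s, (N J <= s)%N -> `|l - u s| <= q ^+ J * D) ->
  u @ \oo --> l.
Proof.
move=> /andP[q_ge0 q_lt1] u_close; apply/cvgrPdist_lt => e e_gt0.
have : (fun J => q ^+ J * D) @ \oo --> 0.
  by rewrite -(mul0r D); apply: cvgMr_tmp; apply: cvg_expr; rewrite ger0_norm.
move=> /cvgrPdist_lt /(_ e e_gt0) [J0 _ J0_small].
exists (N J0) => // s s_ge; apply: le_lt_trans (u_close _ _ s_ge) _.
by have := J0_small J0 (leqnn _); rewrite /= sub0r normrN; exact: le_lt_trans (ler_norm _).
Qed.

Section SelmerMap.
Variables (R : realType) (n : nat).
Hypothesis n_gt0 : (0 < n)%N.
Implicit Types y : 'I_n -> R.

Lemma xcoordE y (i : 'I_n) : xcoord y i = y i.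
Proof. by rewrite /xcoord valK. Qed.

Lemma xcoord_selmer y j : (j < n)%N ->
  xcoord (selmer y) j = if (j.+1 < n)%N then xcoord y j.+1 / xcoord y 0
                        else (1 - (digit y)%:R * xcoord y n.-1) / xcoord y 0.
Proof. by move=> jn; rewrite -[j]/(val (Ordinal jn)) xcoordE. Qed.

Lemma inB_last_le y j : inB y -> (j < n)%N -> xcoord y n.-1 <= xcoord y j.
Proof.
case=> _ [y_decr _] jn; rewrite -(subKn (ltnSE (_ : j < n.-1.+1)%N)) ?prednK //.
elim: (n.-1 - j)%N (leq_subr j n.-1) => [|d IHd] d_le; first by rewrite subn0.
apply: le_trans (IHd (ltnW d_le)) _.
by rewrite -[(n.-1 - d)%N](subnSK d_le); apply: y_decr; lia.
Qed.

Section Step.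
Variable y : 'I_n -> R.
Hypotheses (y_inB : inB y) (y_last_gt0 : 0 < xcoord y n.-1).

Lemma xcoord0_gt0 : 0 < xcoord y 0.
Proof. exact: lt_le_trans y_last_gt0 (inB_last_le y_inB n_gt0). Qed.

Lemma digit_remainder :
  0 <= 1 - (digit y)%:R * xcoord y n.-1 < xcoord y n.-1.
Proof.
have /truncn_itv/andP[k_le k_gt] : 0 <= (xcoord y n.-1)^-1 by rewrite invr_ge0 ltW.
have k_yn_le1 : (digit y)%:R * xcoord y n.-1 <= 1 by rewrite -ler_pdivlMr // div1r.
have : 1 < (digit y).+1%:R * xcoord y n.-1 by rewrite -ltr_pdivrMr // div1r.
rewrite -natr1 mulrDl mul1r => k_yn_gt1; apply/andP; split; lra.
Qed.

Lemma digit_gt0 : (0 < digit y)%N.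
Proof.
rewrite /digit truncn_gt0 invf_ge1 //.
by case: y_inB => y0_le1 _; exact: le_trans (inB_last_le y_inB n_gt0) y0_le1.
Qed.

Lemma inB_selmer : inB (selmer y).
Proof.
have y0_gt0 := xcoord0_gt0; have /andP[rem_ge0 rem_lt] := digit_remainder.
case: (y_inB) => y0_le1 [y_decr _].
split; [|split].
- rewrite xcoord_selmer //; case: ifP => [n_gt1|n_le1]; rewrite ler_pdivrMr // mul1r.
    exact: y_decr.
  have n1 : n.-1 = 0%N by move/negbT: n_le1; lia.
  by rewrite n1 in rem_lt *; exact: ltW.
- move=> j jn; rewrite !xcoord_selmer 1?jn //; last lia.
  case: ifP => [jn2|/negbT jn2]; rewrite ler_pdivrMr // divfK ?gt_eqF //; first exact: y_decr.
  by rewrite (_ : j.+1 = n.-1) ?(ltW rem_lt) //; lia.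
- rewrite xcoord_selmer ?prednK // ltnn.
  exact: divr_ge0 rem_ge0 (ltW y0_gt0).
Qed.

End Step.
End SelmerMap.

Definition beta_prod (R : realType) (n : nat) (k : nat -> nat) (t : nat) : 'M[R]_n.+1 :=
  \prod_(i < t) beta R n (k i).

Section BetaMatrices.
Context {R : realType} {n : nat}.
Hypothesis n_gt0 : (0 < n)%N.
Local Notation beta := (beta R n).

Lemma beta_ge0 k i j : 0 <= beta k i j.
Proof. by rewrite mxE; repeat case: ifP. Qed.

Lemma beta_subdiag k b : (b < n)%N -> beta k (inord b.+1) (inord b) = 1.
Proof. by move=> bn; rewrite mxE !inordK ?eqxx //=; lia. Qed.

Lemma beta_0n k : beta k ord0 (inord n) = 1.
Proof. by rewrite mxE inordK // ifN_eq ?eqxx //; lia. Qed.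

Lemma beta_0n1 k : beta k ord0 (inord n.-1) = k%:R.
Proof. by rewrite mxE inordK ?eqxx //; lia. Qed.

Lemma beta_col_gt0 k (j : 'I_n.+1) : exists i, 0 < beta k i j.
Proof.
have [jn | nj] := ltnP j n.
  by exists (inord j.+1); rewrite -{2}(inord_val j) beta_subdiag.
have -> : j = inord n by apply: val_inj; rewrite /= inordK //; have := ltn_ord j; lia.
by exists ord0; rewrite beta_0n.
Qed.

Lemma beta_mulmx_row0 k (v : 'cV[R]_n.+1) :
  (beta k *m v) ord0 0 = k%:R * v (inord n.-1) 0 + v (inord n) 0.
Proof.
have n1_neq_n : (inord n.-1 : 'I_n.+1) != inord n.
  by apply/eqP => /(congr1 val) /=; rewrite !inordK //; lia.
rewrite mxE (bigD1 (inord n.-1)) // (bigD1 (inord n)) /=; last by rewrite eq_sym.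
rewrite big1 ?addr0.
  by rewrite beta_0n1 beta_0n mul1r.
move=> h /andP[h_n1 h_n].
rewrite -(inj_eq val_inj) /= inordK in h_n1; last lia.
rewrite -(inj_eq val_inj) /= inordK // in h_n.
by rewrite mxE /= (negbTE h_n1) (negbTE h_n) mul0r.
Qed.

Lemma beta_mulmx_rowS k (v : 'cV[R]_n.+1) (j : 'I_n.+1) : (0 < j)%N ->
  (beta k *m v) j 0 = v (inord j.-1) 0.
Proof.
move=> j_gt0; have jn : (j.-1 < n)%N by have := ltn_ord j; lia.
rewrite mxE (bigD1 (inord j.-1)) //= big1 ?addr0.
  have jE : j = inord j.-1.+1 by rewrite prednK // inord_val.
  by rewrite [X in beta _ X]jE beta_subdiag // mul1r.
move=> h h_neq; rewrite mxE (negbTE (lt0n_neq0 j_gt0)) ifN ?mul0r //.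
by apply: contraNneq h_neq => jE; rewrite -val_eqE /= jE inordK ?ltn_ord.
Qed.

Definition homog (y : 'I_n -> R) : 'cV[R]_n.+1 :=
  \col_j (if j == 0%N :> nat then 1 else xcoord y j.-1).

Lemma homog_selmer (y : 'I_n -> R) : 0 < xcoord y 0 ->
  homog y = xcoord y 0 *: (beta (digit y) *m homog (selmer y)).
Proof.
move=> y0_gt0; have y0_neq0 := lt0r_neq0 y0_gt0.
apply/matrixP => j z; rewrite [z]ord1 mxE [RHS]mxE.
have [j0 | j_gt0] := posnP j.
  have -> : j = ord0 by exact: val_inj.
  have n1_lt : (n.-1 < n.+1)%N by lia.
  rewrite /= beta_mulmx_row0 !mxE (inordK n1_lt) (inordK (ltnSn n)).
  rewrite (ifN_eq _ _ (lt0n_neq0 n_gt0)).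
  have n1_lt_n : (n.-1 < n)%N by lia.
  rewrite (xcoord_selmer _ n1_lt_n) prednK // ltnn.
  case: (posnP n.-1) => [n1 | n1_gt0]; first by rewrite /= n1; field.
  have n2_lt_n : (n.-2 < n)%N by lia.
  rewrite (xcoord_selmer _ n2_lt_n).
  by rewrite prednK // n1_lt_n; field.
have jn : (j.-1 < n)%N by have := ltn_ord j; lia.
rewrite beta_mulmx_rowS // mxE (inordK (ltnW jn)).
case: (posnP j.-1) => [j1 | j1_gt0]; first by rewrite j1 mulr1.
have j2n : (j.-2 < n)%N by lia.
by rewrite (xcoord_selmer _ j2n) prednK // jn mulrC divfK.
Qed.

Lemma beta_prodS k t : beta_prod R n k t.+1 = beta_prod R n k t *m beta (k t).
Proof. by rewrite /beta_prod big_ord_recr mulmxE. Qed.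

Lemma beta_prodD k s t :
  beta_prod R n k (s + t) = beta_prod R n k s *m beta_prod R n (fun i => k (s + i)%N) t.
Proof. by rewrite /beta_prod big_split_ord mulmxE. Qed.

Lemma beta_prod_ge0 k t i j : 0 <= beta_prod R n k t i j.
Proof.
elim: t i j => [|t IHt] i j; first by rewrite /beta_prod big_ord0 mxE; case: eqP.
by rewrite beta_prodS; apply: mulmx_ge0 => // ? ?; exact: beta_ge0.
Qed.

Lemma beta_prod_col_gt0 k t j : exists i, 0 < beta_prod R n k t i j.
Proof.
elim: t j => [|t IHt] j; first by exists j; rewrite /beta_prod big_ord0 mxE eqxx ltr01.
have [h bhj] := beta_col_gt0 (k t) j; have [i pih] := IHt h.
exists i; rewrite beta_prodS; apply: (mulmx_gt0 _ _ pih bhj) => ? ?.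
  exact: beta_prod_ge0.
exact: beta_ge0.
Qed.

End BetaMatrices.

Section Primitivity.
Context {R : realType} {n : nat} {k : nat -> nat}.
Hypotheses (n_gt0 : (0 < n)%N) (k_gt0 : forall i, (0 < k i)%N).

(* [reach t a b]: a path of length t from a to b in the support graph of beta(k), whose
   edges are b+1 -> b, 0 -> n and (as k >= 1) 0 -> n-1; the cycles through 0 have
   lengths n + 1 and n. *)
Let reach t a b := 0 < beta_prod R n k t (inord a) (inord b).

Let inord0 : inord 0 = ord0 :> 'I_n.+1.
Proof. by apply: val_inj; rewrite /= inordK. Qed.

Let reach_step t a b c : reach t a b -> 0 < beta R n (k t) (inord b) (inord c) ->
  reach t.+1 a c.
Proof.
move=> ab bc; rewrite /reach beta_prodS; apply: (mulmx_gt0 _ _ ab bc) => ? ?.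
  exact: beta_prod_ge0.
exact: beta_ge0.
Qed.

Let reach_descend t a b d : (d <= b)%N -> (b <= n)%N -> reach t a b ->
  reach (t + d) a (b - d).
Proof.
move=> + bn; elim: d => [|d IHd] db ab; first by rewrite addn0 subn0.
rewrite addnS; apply: reach_step (IHd (ltnW db) ab) _.
by rewrite -[(b - d)%N](subnSK db) (beta_subdiag n_gt0) ?ltr01 //; lia.
Qed.

Let reach_cycle t a : reach t a 0 -> reach (t + n) a 0 /\ reach (t + n.+1) a 0.
Proof.
move=> a0.
have a_n1 : reach t.+1 a n.-1 by apply: reach_step a0 _; rewrite inord0 (beta_0n1 n_gt0) ltr0n.
have a_n : reach t.+1 a n by apply: reach_step a0 _; rewrite inord0 (beta_0n n_gt0) ltr01.
split.
  by have := reach_descend (leqnn _) (leq_pred n) a_n1; rewrite subnn addSnnS prednK.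
by have := reach_descend (leqnn _) (leqnn _) a_n; rewrite subnn addSnnS.
Qed.

Let reach_cycles t a u v : reach t a 0 -> reach (t + (u * n + v * n.+1)) a 0.
Proof.
move=> a0; elim: v => [|v IHv].
  elim: u => [|u IHu]; first by rewrite !mul0n !addn0.
  have -> : (t + (u.+1 * n + 0 * n.+1) = t + (u * n + 0 * n.+1) + n)%N.
    by rewrite mulSn; lia.
  by case: (reach_cycle IHu).
have -> : (t + (u * n + v.+1 * n.+1) = t + (u * n + v * n.+1) + n.+1)%N.
  by rewrite mulSn; lia.
by case: (reach_cycle IHv).
Qed.

Lemma beta_prod_gt0 T (a b : 'I_n.+1) : (n * n.+1 < T)%N -> 0 < beta_prod R n k T a b.
Proof.
move=> T_gt; have a_le : (a <= n)%N := ltn_ord a; have b_le : (b <= n)%N := ltn_ord b.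
have a0 : reach a a 0.
  have aa : reach 0 a a by rewrite /reach /beta_prod big_ord0 mxE eqxx ltr01.
  by have := reach_descend (leqnn a) a_le aa; rewrite add0n subnn.
have [u [v ME]] : exists u v, (T - a - (n.+1 - b) = u * n + v * n.+1)%N.
  by apply: coin_decomp => //; nia.
have := reach_cycles u v a0; rewrite -ME => aM.
have aMn : reach (a + (T - a - (n.+1 - b))).+1 a n.
  by apply: reach_step aM _; rewrite inord0 (beta_0n n_gt0) ltr01.
have := reach_descend (leq_subr b n) (leqnn n) aMn.
by rewrite subKn // (_ : _ + _ = T)%N ?/reach ?inord_val //; nia.
Qed.

End Primitivity.

Section Orbit.
Variables (R : realType) (n : nat) (x : 'I_n -> R).
Hypotheses (n_gt0 : (0 < n)%N) (x_inB : inB x).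
Hypothesis orbit_last_gt0 : forall s, 0 < xcoord (iter s (@selmer R n) x) n.-1.

Let y s := iter s (@selmer R n) x.
Let k s := digit (y s).

Lemma orbit_inB s : inB (y s).
Proof. by elim: s => //= s IHs; exact: (inB_selmer n_gt0 IHs (orbit_last_gt0 s)). Qed.

Lemma orbit_digit_gt0 s : (0 < k s)%N.
Proof. exact: (digit_gt0 n_gt0 (orbit_inB s) (orbit_last_gt0 s)). Qed.

Lemma betasE s : betas x s = beta_prod R n k s.
Proof. by elim: s => [|s IHs]; rewrite ?beta_prodS -?IHs // /beta_prod big_ord0. Qed.

Lemma betasD s t : betas x (s + t) = betas x s *m beta_prod R n (fun i => k (s + i)%N) t.
Proof. by rewrite !betasE beta_prodD. Qed.

Lemma homog_orbit s : exists2 l, 0 < l & homog x = l *: (betas x s *m homog (y s)).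
Proof.
elim: s => [|s [l l_gt0 xE]]; first by exists 1; rewrite ?ltr01 // mul1mx scale1r.
have y0_gt0 := xcoord0_gt0 n_gt0 (orbit_inB s) (orbit_last_gt0 s).
exists (l * xcoord (y s) 0); first exact: mulr_gt0.
by rewrite xE (homog_selmer n_gt0 y0_gt0) -scalemxAr scalerA mulmxA.
Qed.

Lemma homog_orbit_ge0 s j : 0 <= homog (y s) j 0.
Proof.
rewrite mxE; case: ifP => // /negbT j_neq0.
have jn : (j.-1 < n)%N by have := ltn_ord j; lia.
exact: le_trans (ltW (orbit_last_gt0 s)) (inB_last_le n_gt0 (orbit_inB s) jn).
Qed.

Lemma x_mediant s i :
  x i = mediant (betas x s ord0) (betas x s (lift ord0 i)) (fun h => homog (y s) h 0).
Proof.
have [l l_gt0 xE] := homog_orbit s.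
have := congr1 (fun v : 'cV[R]_n.+1 => v ord0 0) xE.
have := congr1 (fun v : 'cV[R]_n.+1 => v (lift ord0 i) 0) xE.
rewrite /= !mxE /= xcoordE /mediant => -> S0E.
by rewrite -[X in _ / X](mulKf (lt0r_neq0 l_gt0)) -S0E mulr1 invrK mulrC.
Qed.

Lemma betas_gt0 s i j : (n * n.+1 < s)%N -> 0 < betas x s i j.
Proof.
move=> s_gt; rewrite -(subnKC s_gt) betasD.
have [h bhj] := beta_prod_col_gt0 (R := R) n_gt0
  (fun t => k ((n * n.+1).+1 + t)%N) (s - (n * n.+1).+1) j.
apply: (mulmx_gt0 _ _ _ bhj) => [? ?|? ?|]; rewrite ?betasE ?beta_prod_ge0 //.
exact: (beta_prod_gt0 n_gt0 orbit_digit_gt0).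
Qed.

Definition ratio s (i : 'I_n) (g : 'I_n.+1) := betas x s (lift ord0 i) g / betas x s ord0 g.

Lemma ratioD s t i g : ratio (s + t) i g = mediant (betas x s ord0) (betas x s (lift ord0 i))
  (fun h => beta_prod R n (fun j => k (s + j)%N) t h g).
Proof. by rewrite /ratio betasD !mxE. Qed.

Definition ratio_min s i := ratio s i [arg min_(g < ord0) ratio s i g]%O.
Definition ratio_max s i := ratio s i [arg max_(g > ord0) ratio s i g]%O.

Definition ratio_width s i := ratio_max s i - ratio_min s i.

Lemma ratio_itv s i g : ratio_min s i <= ratio s i g <= ratio_max s i.
Proof.
rewrite /ratio_min /ratio_max; case: arg_minP => // g1 _ g1_min.
by case: arg_maxP => // g2 _ g2_max; rewrite g1_min //=; apply: g2_max.
Qed.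

Lemma ratioD_itv s t i g : (n * n.+1 < s)%N ->
  ratio_min s i <= ratio (s + t) i g <= ratio_max s i.
Proof.
move=> s_gt; rewrite ratioD; apply: mediant_itv => [h|h||h].
- exact: betas_gt0.
- exact: beta_prod_ge0.
- exact: beta_prod_col_gt0.
- exact: ratio_itv.
Qed.

Lemma x_itv s i : (n * n.+1 < s)%N -> ratio_min s i <= x i <= ratio_max s i.
Proof.
move=> s_gt; rewrite (x_mediant s); apply: mediant_itv => [h|h||h].
- exact: betas_gt0.
- exact: homog_orbit_ge0.
- by exists ord0; rewrite mxE ltr01.
- exact: ratio_itv.
Qed.

Lemma dist_x_ratioD s t i g : (n * n.+1 < s)%N ->
  `|x i - ratio (s + t) i g| <= ratio_width s i.
Proof.
move=> s_gt; have /andP[? ?] := x_itv i s_gt.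
have /andP[? ?] := ratioD_itv t i g s_gt.
by rewrite /ratio_width ler_norml; apply/andP; split; lra.
Qed.

Section Periodic.
Variables m p : nat.
Hypothesis p_gt0 : (0 < p)%N.
Hypothesis periodic : iter (m + p) (@selmer R n) x = iter m (@selmer R n) x.

Lemma orbit_periodic j u : y (m + p * j + u) = y (m + u).
Proof.
elim: j => [|j IHj]; first by rewrite muln0 addn0.
rewrite /y (_ : m + p * j.+1 + u = u + p * j + (m + p))%N; last by rewrite mulnS; lia.
by rewrite iterD periodic -iterD (_ : u + p * j + m = m + p * j + u)%N ?IHj //; lia.
Qed.

Let L := (p * (n * n.+1).+1)%N.
Let Q := beta_prod R n (fun j => k (m + j)%N) L.

Lemma block_digits j : beta_prod R n (fun h => k (m + L * j + h)%N) L = Q.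
Proof. by apply: eq_bigr => h _; rewrite /k /L -mulnA orbit_periodic. Qed.

Lemma block_length_gt : (n * n.+1 < L)%N.
Proof. exact: leq_pmull. Qed.

Lemma block_gt0 a b : 0 < Q a b.
Proof. exact: (beta_prod_gt0 n_gt0 (fun j => orbit_digit_gt0 (m + j)) _ _ block_length_gt). Qed.

Lemma ratio_width_geometric : exists2 q, 0 <= q < 1 &
  forall J i, ratio_width (m + L * J.+1) i <= q ^+ J * ratio_width (m + L) i.
Proof.
have [C QC] := mx_gt0_ratio_bounded block_gt0.
have C2_ge1 : 1 <= C ^+ 2.
  have := QC ord0 ord0 ord0; rewrite -{1}[Q _ _]mul1r ler_pM2r ?block_gt0 // => C_ge1.
  by rewrite expr_ge1 // (le_trans ler01).
have C2_gt0 : 0 < C ^+ 2 := lt_le_trans ltr01 C2_ge1.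
have q_ge0 : 0 <= 1 - (C ^+ 2)^-1 by rewrite subr_ge0 invf_le1.
have q_lt1 : 1 - (C ^+ 2)^-1 < 1 by rewrite ltrBlDl ltrDr invr_gt0.
exists (1 - (C ^+ 2)^-1); first by rewrite q_ge0 q_lt1.
have step j i : (n * n.+1 < m + L * j)%N ->
    ratio_width (m + L * j + L) i <= (1 - (C ^+ 2)^-1) * ratio_width (m + L * j) i.
  move=> s_gt; rewrite mulrC {1}/ratio_width /ratio_max /ratio_min !ratioD block_digits.
  apply: (mediant_contract ord0) => h; rewrite ?betas_gt0 ?block_gt0 ?QC //.
  exact: ratio_itv.
elim=> [|J IHJ] i; first by rewrite expr0 mul1r muln1.
rewrite (_ : m + L * J.+2 = m + L * J.+1 + L)%N; last by rewrite (mulnS L J.+1); lia.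
apply: le_trans (step _ _ _) _; first by have := block_length_gt; nia.
by rewrite [_ ^+ J.+1]exprS -mulrA ler_wpM2l.
Qed.

Lemma ratio_cvg i g : (fun s => ratio s i g) @ \oo --> x i.
Proof.
have [q q_itv width_le] := ratio_width_geometric.
apply: (@cvg_dist_le_geometric _ _ _ _ q (fun J => m + L * J.+1)%N q_itv) => J s s_ge.
rewrite -(subnKC s_ge); apply: le_trans (dist_x_ratioD _ _ _ _) (width_le J i).
by have := block_length_gt; nia.
Qed.

End Periodic.
End Orbit.

Theorem mainTheorem5 (R : realType) (n : nat) (x : 'I_n -> R) :
  (0 < n)%N ->
  inB x ->
  (forall i : nat, 0 < xcoord (iter i (@selmer R n) x) n.-1) ->
  (exists m p : nat, (0 < p)%N /\
     iter (m + p) (@selmer R n) x = iter m (@selmer R n) x) ->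
  (forall i : 'I_n,
     (fun s : nat => betas x s (lift ord0 i) (inord n.-1) / betas x s ord0 (inord n.-1))
       @ \oo --> x i)
  /\
  (forall (g : 'I_n.+1) (i : 'I_n),
     (fun s : nat => betas x s (lift ord0 i) g / betas x s ord0 g) @ \oo --> x i).
Proof.
move=> n_gt0 x_inB orbit_last_gt0 [m [p [p_gt0 periodic]]].
have ratio_cvg_x := ratio_cvg n_gt0 x_inB orbit_last_gt0 p_gt0 periodic.
by split=> [i | g i]; exact: ratio_cvg_x.
Qed.
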